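(* Let $1\le r\le n$, let $I=(x_1,\ldots,x_r)\subset S=K[x_1,\ldots,x_n]$, and let $J\subsetneq I$ be a nonzero square free monomial ideal generated by square free monomials of degrees $\geq 2$. Suppose every square free monomial of degree $2$ lying in $I\setminus J$ belongs to $K[x_1,\ldots,x_r]$. Then $\operatorname{depth}_S I/J=1$ (no assumption relating $r$ and the number of such degree-$2$ monomials is needed).
   Context: $S=K[x_1,\ldots,x_n]$ is the polynomial ring over a field $K$; depth is taken over $S$. *)

From HB Require Import structures.
From mathcomp Require Import all_boot all_order all_algebra.
From mathcomp Require Import mpoly.
Set Implicit Arguments. Unset Strict Implicit. Unset Printing Implicit Defensive.
Import GRing.Theory.
Local Open Scope ring_scope.

(* S = K[x_1,...,x_n] is {mpoly K[n]}; the variable x_{i+1} is 'X_i, i : 'I_n. *)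

Section Defs.
Variables (K : fieldType) (n : nat).
Notation S := {mpoly K[n]}.

Definition in_ideal (gs : seq S) (p : S) : Prop :=
  exists cs : seq S, p = \sum_(i < size gs) cs`_i * gs`_i.

Definition var_gens (r : nat) : seq S :=
  map (fun i : 'I_n => 'X_i) [seq i <- enum 'I_n | (nat_of_ord i < r)%N].

Definition monom_gens (ms : seq 'X_{1..n}) : seq S := [seq 'X_[m] | m <- ms].

Definition squarefree (m : 'X_{1..n}) : Prop := forall i : 'I_n, (m i <= 1)%N.

Definition in_max_ideal (p : S) : Prop := p@_0 = 0.

(* For the module M = I/J (I, J ideals given by generators, J ⊆ I),
   submodule_rep Ig Jg fs p  means: p ∈ I represents an element of
   (f_1,...,f_k) M, i.e. p ∈ J + f_1 I + ... + f_k I. *)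
Definition in_fsM (Ig Jg fs : seq S) (p : S) : Prop :=
  exists a : seq S, (forall i, (i < size fs)%N -> in_ideal Ig a`_i) /\
    in_ideal Jg (p - \sum_(i < size fs) fs`_i * a`_i).

Definition quot_regular_seq (Ig Jg fs : seq S) : Prop :=
  (forall k, (k < size fs)%N -> forall u, in_ideal Ig u ->
      in_fsM Ig Jg (take k fs) (fs`_k * u) -> in_fsM Ig Jg (take k fs) u)
  /\ (exists u, in_ideal Ig u /\ ~ in_fsM Ig Jg fs u).

Definition quot_depth_is (Ig Jg : seq S) (d : nat) : Prop :=
  (exists fs : seq S, size fs = d /\ (forall f, f \in fs -> in_max_ideal f)
      /\ quot_regular_seq Ig Jg fs) /\
  (forall fs : seq S, (forall f, f \in fs -> in_max_ideal f) ->
      quot_regular_seq Ig Jg fs -> (size fs <= d)%N).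

End Defs.

(* Lower bound: the sum s of the variables is a nonzerodivisor on S/J (look at
   [x_i w] for [w] the leading monomial and [x_i] its largest variable; J is
   square free), and x_1 is not in J + s I, as s I has no monomial of degree 1.
   Upper bound: by hypothesis every monomial involving both some x_i with i <= r
   and some x_j with j > r lies in J.  Given a regular sequence x, y in the
   maximal ideal, write x = h + d with h in K[x_1, ..., x_r] and every monomial
   of d involving some x_j, j > r, so that d I is contained in J.  Then y h lies
   in J + x I, hence so does h by regularity of y; and h = x a + j forces
   h (1 - a) in J, so h is in J, as 1 - a is a nonzerodivisor modulo a monomial
   ideal.  Now x I is contained in J, so x is not regular on I/J, since J <> I. *)

From HB Require Import structures.
From mathcomp Require Import all_boot all_order all_algebra.
From mathcomp Require Import mpoly.
From mathcomp Require Import ring.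
Set Implicit Arguments. Unset Strict Implicit. Unset Printing Implicit Defensive.
Import GRing.Theory.
Local Open Scope ring_scope.

Section Depth.
Variables (K : fieldType) (n : nat).
Notation S := {mpoly K[n]}.
Implicit Types (p q : S) (gs : seq S) (m w : 'X_{1..n}) (ms : seq 'X_{1..n}).

Lemma in_idealP gs p :
  in_ideal gs p <-> exists c : nat -> S, p = \sum_(i < size gs) c i * gs`_i.
Proof.
split=> [[cs ->]|[c ->]]; first by exists (fun i => cs`_i).
by exists (mkseq c (size gs)); apply: eq_bigr => i _; rewrite nth_mkseq.
Qed.

Lemma ideal0 gs : in_ideal gs 0.
Proof. by apply/in_idealP; exists (fun _ => 0); rewrite big1 // => i _; rewrite mul0r. Qed.

Lemma idealD gs p q : in_ideal gs p -> in_ideal gs q -> in_ideal gs (p + q).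
Proof.
move=> /in_idealP[c1 ->] /in_idealP[c2 ->]; apply/in_idealP; exists (fun i => c1 i + c2 i).
by rewrite -big_split; apply: eq_bigr => i _; rewrite mulrDl.
Qed.

Lemma idealMl gs s p : in_ideal gs p -> in_ideal gs (s * p).
Proof.
move=> /in_idealP[c ->]; apply/in_idealP; exists (fun i => s * c i).
by rewrite mulr_sumr; apply: eq_bigr => i _; rewrite mulrA.
Qed.

Lemma idealMr gs s p : in_ideal gs p -> in_ideal gs (p * s).
Proof. by rewrite mulrC; apply: idealMl. Qed.

Lemma idealB gs p q : in_ideal gs p -> in_ideal gs q -> in_ideal gs (p - q).
Proof. by move=> hp hq; rewrite -mulN1r; apply: idealD => //; apply: idealMl. Qed.

Lemma ideal_gen gs g : g \in gs -> in_ideal gs g.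
Proof.
move=> /(nthP 0)[k hk <-]; apply/in_idealP; exists (fun i => (i == k)%:R).
rewrite (bigD1 (Ordinal hk)) //= eqxx mul1r big1 ?addr0 // => i /negbTE.
by rewrite -(inj_eq val_inj) /= => ->; rewrite mul0r.
Qed.

Lemma ideal_ind gs (Q : S -> Prop) p : Q 0 -> (forall a b, Q a -> Q b -> Q (a + b)) ->
  (forall s g, g \in gs -> Q (s * g)) -> in_ideal gs p -> Q p.
Proof.
move=> Q0 QD Qg /in_idealP[c ->]; apply: (big_ind Q) => // i _.
by apply: Qg; apply: mem_nth.
Qed.

Lemma in_fsM_nil Ig Jg p : in_fsM Ig Jg [::] p <-> in_ideal Jg p.
Proof.
split=> [[a [_]]|h]; first by rewrite big_ord0 subr0.
by exists [::]; rewrite big_ord0 subr0.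
Qed.

Lemma in_fsM1 Ig Jg f p :
  in_fsM Ig Jg [:: f] p <-> exists a, in_ideal Ig a /\ in_ideal Jg (p - f * a).
Proof.
split=> [[a [ha]]|[a [ha hJ]]].
  by rewrite big_ord1 => h; exists a`_0; split => //; apply: ha.
by exists [:: a]; split; [case | rewrite big_ord1].
Qed.

Definition mdivisible ms m := has (fun g => (g <= m)%MM) ms.

Lemma in_monom_idealP ms p :
  in_ideal (monom_gens K ms) p <-> all (mdivisible ms) (msupp p).
Proof.
split.
  apply: (@ideal_ind _ (fun q => all (mdivisible ms) (msupp q))).
  - by rewrite msupp0.
  - move=> a b ha hb; apply/allP => m /msuppD_le; rewrite mem_cat.
    by case/orP; [move/(allP ha) | move/(allP hb)].
  - move=> s g /mapP[g' hg' ->]; apply/allP => m.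
    rewrite (perm_mem (msuppMX _ _)) => /mapP[m' _ ->].
    by apply/hasP; exists g' => //; apply: lem_addr.
move=> h; rewrite [p]mpolyE big_seq.
apply: (big_ind (in_ideal _)); [exact: ideal0 | exact: idealD | move=> m hm].
have /hasP[g hg hgm] := allP h m hm.
rewrite -(submK hgm) mpolyXD -mul_mpolyC mulrA; apply: idealMl.
by apply: ideal_gen; apply: map_f.
Qed.

Definition mrestrict (P : pred 'X_{1..n}) p : S :=
  \sum_(m <- msupp p | P m) p@_m *: 'X_[m].

Lemma mcoeff_mrestrict P p m : (mrestrict P p)@_m = if P m then p@_m else 0.
Proof.
rewrite /mrestrict raddf_sum /=.
have [hm|hm] := boolP (m \in msupp p).
  rewrite (big_rem m) //= big1_seq ?addr0.
    by case: (P m); rewrite // mcoeffZ mcoeffX eqxx mulr1.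
  move=> k /andP[_]; rewrite (mem_rem_uniq _ (msupp_uniq p)) inE => /andP[hkm _].
  by rewrite mcoeffZ mcoeffX (negbTE hkm) mulr0.
rewrite big1_seq; first by case: (P m); rewrite // memN_msupp_eq0.
move=> k /andP[_ hk]; rewrite mcoeffZ mcoeffX.
by case: eqP => [e|]; [rewrite -e hk in hm | rewrite mulr0].
Qed.

Lemma msupp_mrestrict P p m : m \in msupp (mrestrict P p) -> P m && (m \in msupp p).
Proof. by rewrite !mcoeff_msupp mcoeff_mrestrict; case: (P m); rewrite ?eqxx. Qed.

Lemma mrestrict_split P p : p = mrestrict P p + mrestrict (predC P) p.
Proof.
apply/mpolyP => m; rewrite mcoeffD !mcoeff_mrestrict /=.
by case: (P m); rewrite /= ?addr0 ?add0r.
Qed.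

(* The monomials of [p] lying in [J] can be split off, leaving a [J]-free polynomial. *)
Lemma monom_ideal_cancel ms c :
  (forall q, q != 0 -> ~~ has (mdivisible ms) (msupp q) ->
     ~ in_ideal (monom_gens K ms) (q * c)) ->
  forall p, in_ideal (monom_gens K ms) (p * c) -> in_ideal (monom_gens K ms) p.
Proof.
move=> hc p hpc.
have hsplit := mrestrict_split (mdivisible ms) p.
set q := mrestrict (predC _) p in hsplit.
have hJ : in_ideal (monom_gens K ms) (mrestrict (mdivisible ms) p).
  by apply/in_monom_idealP/allP => m /msupp_mrestrict /andP[].
rewrite hsplit; apply: idealD => //.
have [->|nz] := eqVneq q 0; first exact: ideal0.
exfalso; apply: (hc q nz); first by apply/hasPn => m /msupp_mrestrict /andP[].
have -> : q * c = p * c - mrestrict (mdivisible ms) p * c by rewrite {1}hsplit; ring.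
by apply: idealB => //; apply: idealMr.
Qed.


Lemma mdeg_lepm m1 m2 : (m1 <= m2)%MM -> (mdeg m1 <= mdeg m2)%N.
Proof. by move=> h; rewrite -(submK h) mdegD leq_addl. Qed.

Lemma mnm_neq0P m : reflect (exists i, m i != 0%N) (m != 0%MM).
Proof.
apply: (iffP idP) => [nz|[i]]; last by apply: contra => /eqP ->; rewrite mnm0E.
apply/existsP; apply: contraR nz => /existsPn h.
by apply/eqP/mnmP => i; rewrite mnm0E; move/negPn/eqP: (h i).
Qed.

Definition mvar_lt r m := [exists i : 'I_n, (i < r)%N && (m i != 0%N)].
Definition mvar_ge r m := [exists i : 'I_n, (r <= i)%N && (m i != 0%N)].

Lemma in_var_idealP r p : in_ideal (var_gens K n r) p <-> all (mvar_lt r) (msupp p).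
Proof.
have -> : var_gens K n r =
    monom_gens K [seq U_(i)%MM | i <- [seq i <- enum 'I_n | (nat_of_ord i < r)%N]].
  by rewrite /var_gens /monom_gens -map_comp.
have mdivisibleE m : mdivisible [seq U_(i)%MM | i <- [seq i <- enum 'I_n | (nat_of_ord i < r)%N]] m = mvar_lt r m.
  apply/hasP/existsP => [[g /mapP[i]] | [i /andP[hi hm]]].
    by rewrite mem_filter => /andP[hi _] -> hle; exists i; rewrite hi -lep1mP.
  by exists U_(i)%MM; [apply: map_f; rewrite mem_filter hi mem_enum | rewrite lep1mP].
by rewrite in_monom_idealP (eq_all mdivisibleE).
Qed.

Lemma var_ideal_mcoeff0 r p : in_ideal (var_gens K n r) p -> p@_0%MM = 0.
Proof.
move/in_var_idealP/allP => h; apply/eqP; rewrite mcoeff_eq0; apply/negP => /h.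
by move=> /existsP[i /andP[_]]; rewrite mnm0E eqxx.
Qed.

Lemma mcoeff0_var_ideal p : p@_0%MM = 0 -> in_ideal (var_gens K n n) p.
Proof.
move=> p0; apply/in_var_idealP/allP => m hm.
have /mnm_neq0P[i hi] : m != 0%MM.
  by apply: contraTneq hm => ->; rewrite mcoeff_msupp p0 eqxx.
by apply/existsP; exists i; rewrite ltn_ord.
Qed.

Lemma var_in_var_ideal r (i : 'I_n) : (i < r)%N -> in_ideal (var_gens K n r) 'X_i.
Proof.
move=> hi; apply/in_var_idealP; rewrite msuppX /= andbT; apply/existsP; exists i.
by rewrite hi mnm1E eqxx.
Qed.

(* Compare coefficients at a monomial [w] of least degree in [q]. *)
Lemma monom_ideal_cancel_1B ms g p : g@_0%MM = 0 ->
  in_ideal (monom_gens K ms) (p * (1 - g)) -> in_ideal (monom_gens K ms) p.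
Proof.
move=> g0; apply: monom_ideal_cancel => q nz /hasPn hq /in_monom_idealP /allP hJ.
have hex : exists d, has (fun m => mdeg m == d) (msupp q).
  by exists (mdeg (mlead q)); apply/hasP; exists (mlead q); rewrite ?mlead_supp.
have [d /hasP[w hw /eqP wd] dmin] := ex_minnP hex.
have coef : (q * (1 - g))@_w = q@_w.
  rewrite mulrBr mulr1 mcoeffB mcoeffM big1 ?subr0 // => k /eqP wE.
  have [->|k2_neq0] := eqVneq (k.2 : 'X_{1..n}) 0%MM; first by rewrite g0 mulr0.
  rewrite memN_msupp_eq0 ?mul0r //; apply/negP => hk1.
  have : (d <= mdeg k.1)%N by apply: dmin; apply/hasP; exists (k.1 : 'X_{1..n}).
  have degw : mdeg w = (mdeg k.1 + mdeg k.2)%N by rewrite -mdegD -wE.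
  have : (0 < mdeg k.2)%N by rewrite lt0n mdeg_eq0.
  move: (mdeg k.1) (mdeg k.2) degw wd => a b -> <- b_gt0.
  by rewrite -{2}[a]addn0 leq_add2l leqNgt b_gt0.
have hwq : w \in msupp (q * (1 - g)) by rewrite mcoeff_msupp coef -mcoeff_msupp.
by move: (hq w hw); rewrite (hJ w hwq).
Qed.

Definition sum_vars : S := \sum_(i < n) 'X_i.

Lemma mcoeff0_sum_vars : sum_vars@_0%MM = 0.
Proof. by rewrite /sum_vars raddf_sum big1 // => i _ /=; rewrite mcoeffX mnm1_eq0. Qed.

Lemma exists_max_var w : w != 0%MM ->
  exists2 i : 'I_n, w i != 0%N & forall j, j != i -> w j != 0%N -> ((U_(j))%MM < (U_(i))%MM)%O.
Proof.
move=> /mnm_neq0P[j hj].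
have [i hi imax] := @Order.TotalTheory.arg_maxP _ _ _ j (fun k => w k != 0%N) (fun k => (U_(k))%MM) hj.
exists i => // k hki hk; rewrite Order.POrderTheory.lt_neqAle; apply/andP; split; last exact: imax.
apply: contra hki => /eqP/mnmP/(_ k); rewrite !mnm1E eqxx.
by case: eqP => // ->.
Qed.

(* For [i] the largest variable of [w := mlead q], the monomial [x_i w] only arises as [x_i * w]. *)
Lemma mcoeff_sum_vars_mul q i :
  (forall j, j != i -> mlead q j != 0%N -> ((U_(j))%MM < (U_(i))%MM)%O) ->
  (sum_vars * q)@_(U_(i) + mlead q)%MM = q@_(mlead q).
Proof.
move=> imax; set w := mlead q.
rewrite /sum_vars mulr_suml raddf_sum (bigD1 i) //= big1 ?addr0.
  by rewrite mulrC mcoeffMX.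
move=> j hji; rewrite mulrC.
have [hwj|hwj] := eqVneq (w j) 0%N.
  apply: memN_msupp_eq0; rewrite (perm_mem (msuppMX _ _)).
  apply/negP => /mapP[m _] /mnmP /(_ j).
  by rewrite !mnmDE !mnm1E eq_sym (negbTE hji) hwj eqxx.
have hle : (U_(j) <= w)%MM by rewrite lep1mP.
have -> : (U_(i) + w = U_(j) + (U_(i) + (w - U_(j))))%MM.
  by rewrite [RHS]addmC -addmA submK.
rewrite mcoeffMX; apply: mcoeff_gt_mlead.
by rewrite -/w -{1}(submK hle) [(_ - _ + _)%MM]addmC ltmc_add2l imax.
Qed.

Lemma squarefree_lepm_addU g w (i : 'I_n) :
  squarefree g -> (g <= U_(i) + w)%MM -> w i != 0%N -> (g <= w)%MM.
Proof.
move=> sqg /mnm_lepP gle wi; apply/mnm_lepP => k.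
have [<-|ik] := eqVneq i k; first by apply: leq_trans (sqg i) _; rewrite lt0n.
by move: (gle k); rewrite mnmDE mnm1E (negbTE ik).
Qed.

Lemma sum_vars_cancel ms u : (0 < n)%N ->
  (forall g, g \in ms -> squarefree g /\ (2 <= mdeg g)%N) ->
  in_ideal (monom_gens K ms) (sum_vars * u) -> in_ideal (monom_gens K ms) u.
Proof.
move=> n_gt0 hms; rewrite mulrC.
apply: monom_ideal_cancel => q nz /hasPn hq /in_monom_idealP /allP hJ.
set w := mlead q.
have [i wi imax] : exists2 i : 'I_n, (w == 0%MM) || (w i != 0%N) &
    forall j, j != i -> w j != 0%N -> ((U_(j))%MM < (U_(i))%MM)%O.
  have [->|/exists_max_var[i wi imax]] := eqVneq w 0%MM.
    by exists (Ordinal n_gt0) => // j _; rewrite mnm0E.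
  by exists i; rewrite ?wi ?orbT.
have : (U_(i) + w)%MM \in msupp (sum_vars * q).
  by rewrite mcoeff_msupp mcoeff_sum_vars_mul // -mcoeff_msupp mlead_supp.
rewrite mulrC => /hJ /hasP[g hg hgw]; have [sqg degg] := hms g hg.
have [w0|wi_neq0] := boolP (w == 0%MM).
  by move: (leq_trans degg (mdeg_lepm hgw)); rewrite (eqP w0) addm0 mdeg1.
rewrite (negbTE wi_neq0) /= in wi.
have wJ : mdivisible ms w by apply/hasP; exists g => //; exact: squarefree_lepm_addU hgw wi.
by move: (hq w (mlead_supp nz)); rewrite wJ.
Qed.

(* [sum_vars * a] has no monomial of degree 1 since neither factor has a constant term. *)
Lemma var_notin_sum_vars_fsM r ms (i : 'I_n) : (forall g, g \in ms -> (2 <= mdeg g)%N) ->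
  ~ in_fsM (var_gens K n r) (monom_gens K ms) [:: sum_vars] 'X_i.
Proof.
move=> hms /in_fsM1[a [/var_ideal_mcoeff0 a0 /in_monom_idealP /allP hJ]].
have coef : (sum_vars * a)@_U_(i) = 0.
  apply: memN_msupp_eq0; apply/negP => /msuppM_le /allpairsP[[m1 m2] [/= h1 h2 e]].
  have m1_neq0 : m1 != 0%MM.
    by apply: contraTneq h1 => ->; rewrite mcoeff_msupp mcoeff0_sum_vars eqxx.
  have m2_neq0 : m2 != 0%MM by apply: contraTneq h2 => ->; rewrite mcoeff_msupp a0 eqxx.
  move: (congr1 mdeg e) m1_neq0 m2_neq0; rewrite mdeg1 mdegD -!mdeg_eq0.
  by move: (mdeg m1) (mdeg m2) => [|[|d1]] [|d2].
have : U_(i)%MM \in msupp ('X_i - sum_vars * a).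
  by rewrite mcoeff_msupp mcoeffB coef subr0 mcoeffX eqxx oner_neq0.
move=> /hJ /hasP[g hg hgi].
by move: (leq_trans (hms g hg) (mdeg_lepm hgi)); rewrite mdeg1.
Qed.


Section UpperBound.
Variables (r : nat) (Jm : seq 'X_{1..n}).
Notation I := (var_gens K n r).
Notation J := (monom_gens K Jm).
Hypothesis base_quadrics : forall m, squarefree m -> mdeg m = 2%N ->
  in_ideal I 'X_[m] -> ~ in_ideal J 'X_[m] -> forall i : 'I_n, (0 < m i)%N -> (i < r)%N.

(* [m] is divisible by some [x_i x_j] with [i < r <= j], which lies in [J] by hypothesis. *)
Lemma mixed_mdivisible m : mvar_lt r m -> mvar_ge r m -> mdivisible Jm m.
Proof.
move=> /existsP[i /andP[ir mi]] /existsP[j /andP[rj mj]].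
have ij : i != j by apply: contraTneq ir => ->; rewrite -leqNgt.
pose u := (U_(i) + U_(j))%MM.
have uE k : u k = ((i == k) + (j == k))%N by rewrite mnmDE !mnm1E.
have ui : u i = 1%N by rewrite uE eqxx eq_sym (negbTE ij).
have uj : u j = 1%N by rewrite uE eqxx (negbTE ij).
have u_le_m : (u <= m)%MM.
  apply/mnm_lepP => k; rewrite uE.
  have [<-|ik] := eqVneq i k; first by rewrite eq_sym (negbTE ij) lt0n.
  by have [<-|//] := eqVneq j k; rewrite lt0n.
suff /hasP[g hg gu] : mdivisible Jm u by apply/hasP; exists g => //; apply: lepm_trans u_le_m.
apply: contraT => uJ.
have u_sqf : squarefree u.
  move=> k; rewrite uE; have [<-|_] := eqVneq i k; last by case: (j == k).
  by rewrite eq_sym (negbTE ij).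
have u_deg : mdeg u = 2%N by rewrite mdegD !mdeg1.
have uI : in_ideal I 'X_[u].
  by apply/in_var_idealP; rewrite msuppX /= andbT; apply/existsP; exists i; rewrite ir ui.
have uJ' : ~ in_ideal J 'X_[u].
  by move/in_monom_idealP; rewrite msuppX /= andbT (negbTE uJ).
by have := base_quadrics u_sqf u_deg uI uJ' (i := j); rewrite uj => /(_ isT); rewrite ltnNge rj.
Qed.

Lemma outer_mul_in_J a u : all (mvar_ge r) (msupp a) -> in_ideal I u -> in_ideal J (a * u).
Proof.
move=> /allP ha /in_var_idealP /allP hu; apply/in_monom_idealP/allP => m.
move=> /msuppM_le /allpairsP[[m1 m2] [/= h1 h2 ->]]; apply: mixed_mdivisible.
  have /existsP[i /andP[ir m2i]] := hu _ h2; apply/existsP; exists i.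
  by rewrite ir mnmDE addn_eq0 negb_and m2i orbT.
have /existsP[i /andP[ri m1i]] := ha _ h1; apply/existsP; exists i.
by rewrite ri mnmDE addn_eq0 negb_and m1i.
Qed.

Lemma max_ideal_split x : x@_0%MM = 0 ->
  exists h d, [/\ x = h + d, in_ideal I h & all (mvar_ge r) (msupp d)].
Proof.
move=> x0; exists (mrestrict (predC (mvar_ge r)) x), (mrestrict (mvar_ge r) x).
split; first by rewrite addrC -mrestrict_split.
  apply/in_var_idealP/allP => m /msupp_mrestrict /andP[/= mL mx].
  have /mnm_neq0P[i mi] : m != 0%MM.
    by apply: contraTneq mx => ->; rewrite mcoeff_msupp x0 eqxx.
  apply/existsP; exists i; rewrite mi andbT ltnNge.
  by apply: contra mL => ri; apply/existsP; exists i; rewrite ri.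
by apply/allP => m /msupp_mrestrict /andP[].
Qed.

Section Split.
Variables (x h d : S).
Hypotheses (xE : x = h + d) (hI : in_ideal I h) (dL : all (mvar_ge r) (msupp d)).

Lemma var_mul_base_fsM (i : 'I_n) :
  exists a, in_ideal I a /\ in_ideal J ('X_i * h - x * a).
Proof.
have [ir|ri] := ltnP i r.
  exists 'X_i; split; first exact: var_in_var_ideal.
  have -> : 'X_i * h - x * 'X_i = - (d * 'X_i) by rewrite xE; ring.
  by rewrite -mulN1r; apply/idealMl/outer_mul_in_J => //; apply: var_in_var_ideal.
exists 0; split; first exact: ideal0.
rewrite mulr0 subr0; apply: outer_mul_in_J => //.
by rewrite msuppX /= andbT; apply/existsP; exists i; rewrite ri mnm1E eqxx.
Qed.

Lemma max_ideal_mul_base_fsM y : y@_0%MM = 0 -> in_fsM I J [:: x] (y * h).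
Proof.
move=> /mcoeff0_var_ideal yI; apply/in_fsM1.
apply: (@ideal_ind _ (fun q => exists a, in_ideal I a /\ in_ideal J (q * h - x * a)))
  yI => [|p q [a [aI pJ]] [b [bI qJ]]|s _ /mapP[i _ ->]].
- by exists 0; split; rewrite ?mul0r ?mulr0 ?subr0; apply: ideal0.
- exists (a + b); split; first exact: idealD.
  have -> : (p + q) * h - x * (a + b) = (p * h - x * a) + (q * h - x * b) by ring.
  exact: idealD.
- have [a [aI iJ]] := var_mul_base_fsM i.
  exists (s * a); split; first exact: idealMl.
  have -> : s * 'X_i * h - x * (s * a) = s * ('X_i * h - x * a) by ring.
  exact: idealMl.
Qed.

(* [h = x a + j] gives [h (1 - a) = j + d a] in [J], and [1 - a] is a nonzerodivisor modulo [J]. *)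
Lemma base_fsM_in_J : in_fsM I J [:: x] h -> in_ideal J h.
Proof.
move=> /in_fsM1[a [aI hJ]].
apply: (@monom_ideal_cancel_1B _ a); first exact: var_ideal_mcoeff0 aI.
have -> : h * (1 - a) = (h - x * a) + d * a by rewrite xE; ring.
by apply: idealD => //; apply: outer_mul_in_J.
Qed.

End Split.

Lemma regular_seq_size_le1 fs : (exists u, in_ideal I u /\ ~ in_ideal J u) ->
  (forall f, f \in fs -> in_max_ideal f) -> quot_regular_seq I J fs -> (size fs <= 1)%N.
Proof.
move=> [u [uI uJ]] hmax [hreg _].
case: fs hmax hreg => [|x [|y fs]] // hmax hreg; exfalso.
have [h [d [xE hI dL]]] := max_ideal_split (hmax x (mem_head _ _)).
have hJ : in_ideal J h.
  apply: (base_fsM_in_J xE dL); apply: (hreg 1%N isT h hI).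
  by apply: (max_ideal_mul_base_fsM xE hI dL); apply: hmax; rewrite !inE eqxx orbT.
apply/uJ/in_fsM_nil/(hreg 0%N isT u uI)/in_fsM_nil.
by rewrite xE mulrDl; apply: idealD; [apply: idealMr | apply: outer_mul_in_J].
Qed.

End UpperBound.

End Depth.

Theorem lemma1p13 (K : fieldType) (n r : nat) (Jm : seq 'X_{1..n}) :
  (1 <= r <= n)%N ->
  (forall m, m \in Jm -> squarefree m /\ (2 <= mdeg m)%N) ->
  Jm != [::] ->
  (forall p : {mpoly K[n]}, in_ideal (monom_gens K Jm) p -> in_ideal (var_gens K n r) p) ->
  (exists p : {mpoly K[n]}, in_ideal (var_gens K n r) p /\ ~ in_ideal (monom_gens K Jm) p) ->
  (forall m : 'X_{1..n}, squarefree m -> mdeg m = 2%N ->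
      in_ideal (var_gens K n r) ('X_[m] : {mpoly K[n]}) ->
      ~ in_ideal (monom_gens K Jm) 'X_[m] ->
      forall i : 'I_n, (0 < m i)%N -> (i < r)%N) ->
  quot_depth_is (var_gens K n r) (monom_gens K Jm) 1.

Proof.
move=> /andP[r_gt0 r_le_n] hJm _ _ hIJ hbase.
have n_gt0 : (0 < n)%N := leq_trans r_gt0 r_le_n.
split; last by move=> fs; apply: regular_seq_size_le1 hbase fs hIJ.
exists [:: sum_vars K n]; split=> //; split.
  by move=> f; rewrite inE => /eqP ->; apply: mcoeff0_sum_vars.
split.
  case=> // _ u _ /in_fsM_nil fuJ; apply/in_fsM_nil; exact: sum_vars_cancel fuJ.
exists 'X_(Ordinal n_gt0); split; first exact: var_in_var_ideal.
by apply: var_notin_sum_vars_fsM => g /hJm[].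
Qed.
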